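(* Suppose $\sigma$ is an automorphism of $D$ and let $f(t)=t^4+a_3t^3+a_2t^2+a_1t+a_0\in D[t;\sigma]$. Then $f$ is irreducible if and only if the following three conditions hold: (1) for all $b\in D$: $\sigma^3(b)\sigma^2(b)\sigma(b)b+a_3\sigma^2(b)\sigma(b)b+a_2\sigma(b)b+a_1b+a_0\neq0$; (2) for all $b\in D$: $\sigma^3(b)\sigma^2(b)\sigma(b)b+\sigma^3(b)\sigma^2(b)\sigma(b)a_3+\sigma^3(b)\sigma^2(b)\sigma(a_2)+\sigma^3(b)\sigma^2(a_1)+\sigma^3(a_0)\neq0$; (3) for all $c,d\in D$: $\sigma^2(c)\sigma(c)c+\sigma^2(d)c+\sigma^2(c)\sigma(d)+a_3(\sigma(d)+\sigma(c)c)+a_2c+a_1\neq0$ or $\sigma^2(d)d+\sigma^2(c)\sigma(c)d+a_3\sigma(c)d+a_2d+a_0\neq0$.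
   Context: $D$ is an associative division ring, $\sigma$ a ring automorphism of $D$, and $D[t;\sigma]$ the skew polynomial ring with $ta=\sigma(a)t$. A polynomial $f$ is irreducible if it is not a unit and has no factorization $f=gh$ with $\deg g,\deg h<\deg f$. *)

From HB Require Import structures.
From mathcomp Require Import all_boot all_order all_algebra.
Set Implicit Arguments. Unset Strict Implicit. Unset Printing Implicit Defensive.
Import GRing.Theory.
Local Open Scope ring_scope.

Definition division_ring (D : unitRingType) : Prop :=
  forall x : D, x != 0 -> x \is a GRing.unit.

(* Elements of D[t;sigma] are represented by their coefficient polynomials
   p = \sum_i p_i t^i (coefficients on the left); addition is that of {poly D},
   multiplication is the skew one:
   (\sum_i a_i t^i)(\sum_j b_j t^j) = \sum_{i,j} a_i sigma^i(b_j) t^(i+j). *)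
Definition skew_mul (D : nzRingType) (sigma : D -> D) (p q : {poly D}) : {poly D} :=
  \poly_(k < (size p + size q).-1)
     \sum_(i < k.+1) p`_i * iter i sigma q`_(k - i).

Definition skew_unit (D : nzRingType) (sigma : D -> D) (f : {poly D}) : Prop :=
  exists g : {poly D}, skew_mul sigma f g = 1 /\ skew_mul sigma g f = 1.

Definition skew_irreducible (D : nzRingType) (sigma : D -> D) (f : {poly D}) : Prop :=
  ~ skew_unit sigma f /\
  ~ (exists g h : {poly D},
        f = skew_mul sigma g h /\ (size g < size f)%N /\ (size h < size f)%N).

From HB Require Import structures.
From mathcomp Require Import all_boot all_order all_algebra zify.
Import GRing.Theory.
Local Open Scope ring_scope.

Set Implicit Arguments.
Unset Strict Implicit.
Unset Printing Implicit Defensive.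

(* Since D is a division ring and sigma is injective, degrees add in
   D[t;sigma]; hence f is not a unit, and a proper factorisation of the monic
   quartic f has degrees (3,1), (1,3) or (2,2).  Rescaling by units, the factor
   of degree <= 2 can be taken to be t - b on the right, t - b on the left, or
   t^2 - c t - d on the right.  Comparing coefficients, such a factorisation
   exists iff the corresponding remainder of f vanishes, and conditions (1),
   (2), (3) say exactly that these remainders are nonzero.  For a left factor
   t - b the quotient is found by solving sigma(x) = y, which is where the
   surjectivity of sigma is used, and the remainder appears only after applying
   sigma^3. *)

Section SkewMul.
Variables (D : nzRingType) (sigma : {rmorphism D -> D}).

Definition skew_factorable (f : {poly D}) : Prop :=
  exists g h : {poly D},
    f = skew_mul sigma g h /\ (size g < size f)%N /\ (size h < size f)%N.

Lemma iter_rmorph0 i : iter i sigma 0 = 0.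
Proof. by elim: i => //= i ->; rewrite rmorph0. Qed.

Lemma coef_skew_mul p q k :
  (skew_mul sigma p q)`_k = \sum_(i < k.+1) p`_i * iter i sigma q`_(k - i).
Proof.
rewrite coef_poly; case: ltnP => // le_pq_k; symmetry; apply: big1 => i _.
have [lt_i_p | le_p_i] := ltnP i (size p); last by rewrite nth_default ?mul0r.
rewrite [q`_ _]nth_default ?iter_rmorph0 ?mulr0 //.
(* [size q] occurs at two convertible but distinct types, which [lia] would
   treat as different atoms; generalizing the sizes first avoids this. *)
by move: le_pq_k lt_i_p; move: (size p) (size q) (nat_of_ord i); lia.
Qed.

Lemma skew_mul0p q : skew_mul sigma 0 q = 0.
Proof.
by apply/polyP => k; rewrite coef_skew_mul coef0 big1 // => i _; rewrite coef0 mul0r.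
Qed.

Lemma skew_mulp0 p : skew_mul sigma p 0 = 0.
Proof.
apply/polyP => k; rewrite coef_skew_mul coef0 big1 // => i _.
by rewrite coef0 iter_rmorph0 mulr0.
Qed.

Lemma coef_skew_mul_lead p q : p != 0 -> q != 0 ->
  (skew_mul sigma p q)`_((size p).-1 + (size q).-1)
    = lead_coef p * iter (size p).-1 sigma (lead_coef q).
Proof.
move=> p0 q0; rewrite coef_skew_mul.
have p_gt0 : (0 < size p)%N by rewrite size_poly_gt0.
have lt_p_top : ((size p).-1 < ((size p).-1 + (size q).-1).+1)%N by lia.
rewrite (bigD1 (Ordinal lt_p_top)) //= addKn big1 ?addr0 // => i /eqP ne_i_p.
have {}ne_i_p : nat_of_ord i <> (size p).-1 by move=> eq_i_p; apply/ne_i_p/val_inj.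
have [lt_i_p | le_p_i] := ltnP i (size p).-1.
  rewrite [q`_ _]nth_default ?iter_rmorph0 ?mulr0 //.
  by move: lt_i_p; move: (size p) (size q) (nat_of_ord i); lia.
rewrite nth_default ?mul0r //.
by move: ne_i_p le_p_i p_gt0; move: (size p) (nat_of_ord i); lia.
Qed.

Lemma Poly_skew_mul n (l l1 l2 : seq D) :
  (size l <= n)%N -> (size l1 + size l2 <= n.+1)%N ->
  (forall k, (k < n)%N -> l`_k = \sum_(i < k.+1) l1`_i * iter i sigma l2`_(k - i)) ->
  Poly l = skew_mul sigma (Poly l1) (Poly l2).
Proof.
move=> le_l_n le_l12_n coefE; apply/polyP => k.
have [lt_k_n | le_n_k] := ltnP k n.
  by rewrite coef_skew_mul coef_Poly coefE //; apply: eq_bigr => i _; rewrite !coef_Poly.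
rewrite !nth_default //; last exact: leq_trans (size_Poly l) (leq_trans le_l_n le_n_k).
apply: leq_trans (size_poly _ _) (leq_trans _ le_n_k).
by rewrite -subn1 leq_subLR add1n (leq_trans _ le_l12_n) // leq_add ?size_Poly.
Qed.

End SkewMul.

Section SkewMulDivisionRing.
Variables (D : unitRingType) (sigma : {rmorphism D -> D}).
Hypotheses (hD : division_ring D) (sigma_inj : injective sigma).

Lemma iter_sigma_eq0 i x : (iter i sigma x == 0) = (x == 0).
Proof. by elim: i => //= i <-; rewrite raddf_eq0. Qed.

Lemma size_skew_mul p q : p != 0 -> q != 0 ->
  size (skew_mul sigma p q) = (size p + size q).-1.
Proof.
move=> p0 q0; apply/eqP; rewrite eqn_leq size_poly /=.
have : (skew_mul sigma p q)`_((size p).-1 + (size q).-1) != 0.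
  rewrite coef_skew_mul_lead // mulrI_eq0 ?iter_sigma_eq0 ?lead_coef_eq0 //.
  by apply/mulrI/hD; rewrite lead_coef_eq0.
apply: contraNT; rewrite -ltnNge => lt_pq; rewrite nth_default //.
move: lt_pq; rewrite -!size_poly_gt0 in p0 q0; move: p0 q0.
by move: (size p) (size q) (size (skew_mul sigma p q)); lia.
Qed.

Lemma skew_unit_size p : skew_unit sigma p -> size p = 1%N.
Proof.
case=> q [pq1 _].
have p0 : p != 0 by apply: contra_eqN pq1 => /eqP ->; rewrite skew_mul0p eq_sym oner_eq0.
have q0 : q != 0 by apply: contra_eqN pq1 => /eqP ->; rewrite skew_mulp0 eq_sym oner_eq0.
have := size_skew_mul p0 q0; rewrite pq1 size_poly1.
rewrite -!size_poly_gt0 in p0 q0; move: p0 q0.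
by move: (size p) (size q); lia.
Qed.

End SkewMulDivisionRing.

Section Quartic.
Variables (D : unitRingType) (sigma : {rmorphism D -> D}) (a0 a1 a2 a3 : D).
Hypotheses (hD : division_ring D) (sigma_bij : bijective sigma).
Local Notation s := (sigma : D -> D).
Local Notation f := (Poly [:: a0; a1; a2; a3; 1]).

Lemma size_quartic : size f = 5%N.
Proof. by rewrite (PolyK (c := 0)) // oner_eq0. Qed.

(* [f = g (t - b) + rmod_linear b] with [g] monic of degree 3. *)
Definition rmod_linear b :=
  s (s (s b)) * s (s b) * s b * b + a3 * s (s b) * s b * b
  + a2 * s b * b + a1 * b + a0.

(* [sigma^3 r], where [f = (t - b) g + r] with [g] monic of degree 3. *)
Definition lmod_linear b :=
  s (s (s b)) * s (s b) * s b * b + s (s (s b)) * s (s b) * s b * a3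
  + s (s (s b)) * s (s b) * s a2 + s (s (s b)) * s (s a1) + s (s (s a0)).

(* [f = g (t^2 - c t - d) + rmod_quadratic1 c d t + rmod_quadratic0 c d]
   with [g] monic of degree 2. *)
Definition rmod_quadratic1 c d :=
  s (s c) * s c * c + s (s d) * c + s (s c) * s d
  + a3 * (s d + s c * c) + a2 * c + a1.

Definition rmod_quadratic0 c d :=
  s (s d) * d + s (s c) * s c * d + a3 * s c * d + a2 * d + a0.

Lemma rmod_linearE b :
  rmod_linear b = (((s (s (s b)) + a3) * s (s b) + a2) * s b + a1) * b + a0.
Proof. by rewrite !mulrDl. Qed.

Lemma lmod_linearE b :
  lmod_linear b
  = s (s (s b)) * (s (s b) * (s b * (b + a3) + s a2) + s (s a1)) + s (s (s a0)).
Proof. by rewrite !mulrDr !mulrA. Qed.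

Lemma rmod_quadratic1E c d :
  rmod_quadratic1 c d
  = (s (s d) + (s (s c) + a3) * s c + a2) * c + (s (s c) + a3) * s d + a1.
Proof.
rewrite /rmod_quadratic1 !mulrDl mulrDr !mulrA !addrA.
by rewrite [RHS](ACl (2*1*5*6*3*4*7)).
Qed.

Lemma rmod_quadratic0E c d :
  rmod_quadratic0 c d = (s (s d) + (s (s c) + a3) * s c + a2) * d + a0.
Proof. by rewrite !mulrDl !addrA. Qed.

Lemma rmod_linear_factorable b : rmod_linear b = 0 -> skew_factorable sigma f.
Proof.
move=> rem0.
pose g2 := s (s (s b)) + a3; pose g1 := g2 * s (s b) + a2; pose g0 := g1 * s b + a1.
exists (Poly [:: g0; g1; g2; 1]), (Poly [:: -b; 1]).
split; last by rewrite size_quartic; split; exact: leq_ltn_trans (size_Poly _) _.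
apply: (Poly_skew_mul (n := 5)) => //; case=> [|[|[|[|[|k]]]]] // _.
all: rewrite !big_ord_recr big_ord0 /= ?rmorph0 ?rmorphN ?rmorph1.
all: rewrite ?mulr0 ?mul0r ?mulrN ?mulr1 ?mul1r ?add0r ?addr0 ?subr0 //.
- by apply/esym/addr0_eq; rewrite -rem0 rmod_linearE.
- by rewrite /g0 (addrC _ a1) addrK.
- by rewrite /g1 (addrC _ a2) addrK.
- by rewrite /g2 (addrC _ a3) addrK.
Qed.

Lemma lmod_linear_factorable b : lmod_linear b = 0 -> skew_factorable sigma f.
Proof.
move=> rem0; have [sinv sK Ks] := sigma_bij.
pose c2 := sinv (b + a3); pose c1 := sinv (b * c2 + a2); pose c0 := sinv (b * c1 + a1).
exists (Poly [:: -b; 1]), (Poly [:: c0; c1; c2; 1]).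
split; last by rewrite size_quartic; split; exact: leq_ltn_trans (size_Poly _) _.
apply: (Poly_skew_mul (n := 5)) => //; case=> [|[|[|[|[|k]]]]] // _.
all: rewrite !big_ord_recr big_ord0 /= ?rmorph0 ?rmorphN ?rmorph1.
all: rewrite ?mulr0 ?mul0r ?mulNr ?mulr1 ?mul1r ?add0r ?addr0 ?subr0 //.
- apply/esym/addr0_eq/eqP; rewrite -(iter_sigma_eq0 (bij_inj sigma_bij) 3) -rem0 /=.
  by rewrite lmod_linearE !rmorphD !rmorphM Ks !rmorphD !rmorphM Ks !rmorphD !rmorphM Ks.
- by rewrite Ks addKr.
- by rewrite Ks addKr.
- by rewrite Ks addKr.
Qed.

Lemma rmod_quadratic_factorable c d :
  rmod_quadratic1 c d = 0 -> rmod_quadratic0 c d = 0 -> skew_factorable sigma f.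
Proof.
move=> rem1 rem0.
pose G1 := s (s c) + a3; pose G0 := s (s d) + G1 * s c + a2.
exists (Poly [:: G0; G1; 1]), (Poly [:: -d; -c; 1]).
split; last by rewrite size_quartic; split; exact: leq_ltn_trans (size_Poly _) _.
apply: (Poly_skew_mul (n := 5)) => //; case=> [|[|[|[|[|k]]]]] // _.
all: rewrite !big_ord_recr big_ord0 /= ?rmorph0 ?rmorphN ?rmorph1.
all: rewrite ?mulr0 ?mul0r ?mulrN ?mulr1 ?mul1r ?add0r ?addr0 ?subr0 //.
- by apply/esym/addr0_eq; rewrite -rem0 rmod_quadratic0E.
- by rewrite -opprD; apply/esym/addr0_eq; rewrite -rem1 rmod_quadratic1E.
- by rewrite /G0 [RHS](ACl (3*(2*4)*(1*5))) /= !subrr !addr0.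
- by rewrite /G1 (addrC _ a3) addrK.
Qed.

Lemma coef_quartic_factor g h : f = skew_mul sigma g h ->
  [/\ a0 = g`_0 * h`_0,
      a1 = g`_0 * h`_1 + g`_1 * s h`_0,
      a2 = g`_0 * h`_2 + g`_1 * s h`_1 + g`_2 * s (s h`_0),
      a3 = g`_0 * h`_3 + g`_1 * s h`_2 + g`_2 * s (s h`_1) + g`_3 * s (s (s h`_0))
    & 1 = g`_0 * h`_4 + g`_1 * s h`_3 + g`_2 * s (s h`_2) + g`_3 * s (s (s h`_1))
          + g`_4 * s (s (s (s h`_0)))].
Proof.
move=> fgh.
have coefE k : [:: a0; a1; a2; a3; 1]`_k = \sum_(i < k.+1) g`_i * iter i sigma h`_(k - i).
  by rewrite -coef_skew_mul -fgh coef_Poly.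
by split; [move: (coefE 0%N) | move: (coefE 1%N) | move: (coefE 2%N) | move: (coefE 3%N)
  | move: (coefE 4%N)]; rewrite !big_ord_recr big_ord0 /= add0r.
Qed.

Lemma rmod_linear_root (g h : {poly D}) :
  size g = 4%N -> size h = 2%N -> f = skew_mul sigma g h -> exists b, rmod_linear b = 0.
Proof.
move=> sg sh /coef_quartic_factor.
have [g4 h2 h3 h4] : [/\ g`_4 = 0, h`_2 = 0, h`_3 = 0 & h`_4 = 0].
  by split; rewrite nth_default ?sg ?sh.
rewrite g4 h2 h3 h4 !rmorph0 !mulr0 mul0r !addr0 !add0r => -[E0 E1 E2 E3 E4].
have h1_0 : h`_1 != 0.
  by apply/eqP => h1_0; move: E4; rewrite h1_0 !rmorph0 mulr0 => /eqP; rewrite oner_eq0.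
have [b h0E] : exists b, h`_0 = - (h`_1 * b).
  by exists (- ((h`_1)^-1 * h`_0)); rewrite mulrN opprK mulVKr // hD.
exists b; rewrite rmod_linearE.
have -> : s (s (s b)) + a3 = g`_2 * s (s h`_1).
  by rewrite E3 h0E !rmorphN !rmorphM mulrN mulrA -E4 mul1r addrCA addrN addr0.
have -> : g`_2 * s (s h`_1) * s (s b) + a2 = g`_1 * s h`_1.
  by rewrite E2 h0E !rmorphN !rmorphM mulrN !mulrA addrCA addrN addr0.
have -> : g`_1 * s h`_1 * s b + a1 = g`_0 * h`_1.
  by rewrite E1 h0E !rmorphN !rmorphM mulrN !mulrA addrCA addrN addr0.
by rewrite E0 h0E mulrN mulrA addrN.
Qed.

Lemma lmod_linear_root (g h : {poly D}) :
  size g = 2%N -> size h = 4%N -> f = skew_mul sigma g h -> exists b, lmod_linear b = 0.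
Proof.
move=> sg sh /coef_quartic_factor.
have [g2 g3 g4 h4] : [/\ g`_2 = 0, g`_3 = 0, g`_4 = 0 & h`_4 = 0].
  by split; rewrite nth_default ?sg ?sh.
rewrite g2 g3 g4 h4 !mulr0 !mul0r !addr0 !add0r => -[E0 E1 E2 E3 E4].
have [sinv sK Ks] := sigma_bij.
have [v sv] : exists v, s v = g`_1 by exists (sinv g`_1).
have v0 : v != 0.
  by apply/eqP => v0; move: E4; rewrite -sv v0 rmorph0 mul0r => /eqP; rewrite oner_eq0.
have [b g0E] : exists b, g`_0 = - (b * v).
  by exists (- (g`_0 / v)); rewrite mulNr opprK divrK // hD.
have vh3 : v * h`_3 = 1 by apply: (can_inj sK); rewrite rmorphM rmorph1 sv E4.
exists b; rewrite lmod_linearE.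
have -> : b + a3 = s (v * h`_2) by rewrite E3 g0E mulNr -mulrA vh3 mulr1 rmorphM sv addNKr.
have -> : s b * s (v * h`_2) + s a2 = s (s (v * h`_1)).
  by rewrite -rmorphM -rmorphD E2 g0E mulNr !mulrA addNKr rmorphM sv.
have -> : s (s b) * s (s (v * h`_1)) + s (s a1) = s (s (s (v * h`_0))).
  by rewrite -!rmorphM -!rmorphD E1 g0E mulNr !mulrA addNKr rmorphM sv.
by rewrite -!rmorphM -!rmorphD E0 g0E mulNr !mulrA addrN !rmorph0.
Qed.

Lemma rmod_quadratic_root (g h : {poly D}) :
  size g = 3%N -> size h = 3%N -> f = skew_mul sigma g h ->
  exists c d, rmod_quadratic1 c d = 0 /\ rmod_quadratic0 c d = 0.
Proof.
move=> sg sh /coef_quartic_factor.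
have [g3 g4 h3 h4] : [/\ g`_3 = 0, g`_4 = 0, h`_3 = 0 & h`_4 = 0].
  by split; rewrite nth_default ?sg ?sh.
rewrite g3 g4 h3 h4 !rmorph0 !mulr0 !mul0r !addr0 !add0r => -[E0 E1 E2 E3 E4].
have h2_0 : h`_2 != 0.
  by apply/eqP => h2_0; move: E4; rewrite h2_0 !rmorph0 mulr0 => /eqP; rewrite oner_eq0.
have [c h1E] : exists c, h`_1 = - (h`_2 * c).
  by exists (- ((h`_2)^-1 * h`_1)); rewrite mulrN opprK mulVKr // hD.
have [d h0E] : exists d, h`_0 = - (h`_2 * d).
  by exists (- ((h`_2)^-1 * h`_0)); rewrite mulrN opprK mulVKr // hD.
have G1E : s (s c) + a3 = g`_1 * s h`_2.
  by rewrite E3 h1E !rmorphN !rmorphM mulrN mulrA -E4 mul1r addrCA addrN addr0.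
have G0E : s (s d) + (s (s c) + a3) * s c + a2 = g`_0 * h`_2.
  rewrite G1E E2 h1E h0E !rmorphN !rmorphM !mulrN !mulrA -E4 mul1r !addrA.
  by rewrite [LHS](ACl (3*(2*4)*(1*5))) /= !subrr !addr0.
exists c, d; rewrite rmod_quadratic1E rmod_quadratic0E G0E G1E; split.
- by rewrite E1 h1E h0E rmorphN !rmorphM !mulrN !mulrA -opprD addrN.
- by rewrite E0 h0E mulrN mulrA addrN.
Qed.

Lemma quartic_factorable_cases : skew_factorable sigma f ->
  [\/ exists b, rmod_linear b = 0, exists b, lmod_linear b = 0
    | exists c d, rmod_quadratic1 c d = 0 /\ rmod_quadratic0 c d = 0].
Proof.
case=> g [h [fgh]]; rewrite size_quartic => -[lt_g5 lt_h5].
have f0 : f != 0 by rewrite -size_poly_gt0 size_quartic.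
have g0 : g != 0 by apply: contraNneq f0 => g0; rewrite fgh g0 skew_mul0p.
have h0 : h != 0 by apply: contraNneq f0 => h0; rewrite fgh h0 skew_mulp0.
have := size_skew_mul hD (bij_inj sigma_bij) g0 h0; rewrite -fgh size_quartic => size_gh.
rewrite -size_poly_gt0 in g0; rewrite -size_poly_gt0 in h0.
have [[sg sh] | [[sg sh] | [sg sh]]] :
    (size g = 4 /\ size h = 2 \/ size g = 2 /\ size h = 4 \/ size g = 3 /\ size h = 3)%N.
  by move: size_gh lt_g5 lt_h5 g0 h0; move: (size g) (size h); lia.
- by apply: Or31; exact: rmod_linear_root sg sh fgh.
- by apply: Or32; exact: lmod_linear_root sg sh fgh.
- by apply: Or33; exact: rmod_quadratic_root sg sh fgh.
Qed.

End Quartic.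

Theorem mainTheorem15 (D : unitRingType) (hD : division_ring D)
  (sigma : {rmorphism D -> D}) (hsigma : bijective sigma)
  (a0 a1 a2 a3 : D) :
  let s := (sigma : D -> D) in
  let f : {poly D} := Poly [:: a0; a1; a2; a3; 1] in
  skew_irreducible s f <->
  [/\ (forall b : D,
         s (s (s b)) * s (s b) * s b * b + a3 * s (s b) * s b * b
         + a2 * s b * b + a1 * b + a0 != 0),
      (forall b : D,
         s (s (s b)) * s (s b) * s b * b + s (s (s b)) * s (s b) * s b * a3
         + s (s (s b)) * s (s b) * s a2 + s (s (s b)) * s (s a1)
         + s (s (s a0)) != 0)
    & (forall c d : D,
         (s (s c) * s c * c + s (s d) * c + s (s c) * s d
          + a3 * (s d + s c * c) + a2 * c + a1 != 0)
         \/
         (s (s d) * d + s (s c) * s c * d + a3 * s c * d + a2 * d + a0 != 0))].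
Proof.
move=> s f; split=> [[_ not_factorable] | [no_rroot no_lroot no_quad]].
  split=> [b | b | c d].
  - by apply/eqP => /rmod_linear_factorable /not_factorable.
  - by apply/eqP => /(lmod_linear_factorable hsigma) /not_factorable.
  - apply/orP; rewrite -negb_and; apply/negP => /andP[/eqP rem1 /eqP rem0].
    exact/not_factorable/(rmod_quadratic_factorable rem1 rem0).
split; first by move/(skew_unit_size hD (bij_inj hsigma)); rewrite size_quartic.
case/(quartic_factorable_cases hD hsigma) => [[b] | [b] | [c [d [rem1 rem0]]]].
- exact/eqP/no_rroot.
- exact/eqP/no_lroot.
- by case: (no_quad c d) => /eqP.
Qed.
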